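(* Let $\Gamma\le S_k$, $m\ge1$, let $G,H$ be $(\Gamma,m)$-graphs with labelings $\ell_G,\ell_H$, and let $\sigma=(\sigma_V,\sigma_E)$ be a $(\Gamma,m)$-homomorphism from $G$ to $H$. 1. If $e_1,e_2\in E(G)$ satisfy $e_1^-=e_2^-$, $e_1^+=e_2^+$ and $\ell_H(\sigma_E(e_1))=\ell_H(\sigma_E(e_2))$, then $\ell_G(e_1)=\ell_G(e_2)$. 2. Suppose $G$ is symmetrically labeled (every edge of $G$ has a label of the form $(\lambda,i,\lambda)$), and suppose there is a single $\alpha\in\Gamma$ such that for every edge $e\in E(G)$ and every $a\in\{-,+\}$, $\ell^a_G(e)=\alpha\,\ell^a_H(\sigma_E(e))$. Then the image of $\sigma$ is a symmetrically labeled subgraph of $H$, i.e. every edge $\sigma_E(e)$, $e\in E(G)$, has a label of the form $(\mu,i,\mu)$.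
   Context: A graph $G$ consists of finite sets $V(G)$, $E(G)$ and maps $\iota_G,\tau_G:E(G)\to V(G)$; write $e^-=\iota_G(e)$, $e^+=\tau_G(e)$. $S_k$ is the symmetric group on $[k]=\{1,\dots,k\}$. For $\Gamma\le S_k$, $m\ge1$, a $(\Gamma,m)$-graph is a graph with a labeling $\ell_G:E(G)\to\Gamma\times[m]\times\Gamma$; for $\ell_G(e)=(\gamma^-,j,\gamma^+)$ write $\ell^-_G(e)=\gamma^-$, $\ell^*_G(e)=j$, $\ell^+_G(e)=\gamma^+$. A $(\Gamma,m)$-homomorphism $G\to H$ is a pair $\sigma_V:V(G)\to V(H)$, $\sigma_E:E(G)\to E(H)$ with $\iota_H\sigma_E=\sigma_V\iota_G$, $\tau_H\sigma_E=\sigma_V\tau_G$, $\ell^*_G=\ell^*_H\circ\sigma_E$, and such that for all $e_1,e_2\in E(G)$ and $a,b\in\{-,+\}$ with $e_1^a=e_2^b$: $[\ell^a_G(e_1)]^{-1}\ell^b_G(e_2)=[\ell^a_H(\sigma_E(e_1))]^{-1}\ell^b_H(\sigma_E(e_2))$. *)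

From mathcomp Require Import all_boot fingroup perm.
Set Implicit Arguments. Unset Strict Implicit. Unset Printing Implicit Defensive.

Record graph := Graph {
  gV : finType; gE : finType;
  gsrc : gE -> gV; gtgt : gE -> gV }.

(* Signs a in {-,+} are encoded as bool: false = -, true = +. *)
Definition gend (G : graph) (a : bool) (e : gE G) : gV G :=
  if a then gtgt e else gsrc e.

Record lgraph (k m : nat) := LGraph {
  lg :> graph;
  lab : gE lg -> {perm 'I_k} * 'I_m * {perm 'I_k} }.

Definition labm k m (G : lgraph k m) (e : gE G) : {perm 'I_k} := (lab e).1.1.
Definition labj k m (G : lgraph k m) (e : gE G) : 'I_m := (lab e).1.2.
Definition labp k m (G : lgraph k m) (e : gE G) : {perm 'I_k} := (lab e).2.
Definition labs k m (G : lgraph k m) (a : bool) (e : gE G) : {perm 'I_k} :=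
  if a then labp e else labm e.

Definition is_Gm_graph k m (Gamma : {group {perm 'I_k}}) (G : lgraph k m) : Prop :=
  forall e : gE G, labm e \in Gamma /\ labp e \in Gamma.

Definition is_Gm_hom k m (G H : lgraph k m)
  (sV : gV G -> gV H) (sE : gE G -> gE H) : Prop :=
  [/\ forall e, gsrc (sE e) = sV (gsrc e),
      forall e, gtgt (sE e) = sV (gtgt e),
      forall e, labj e = labj (sE e) &
      forall (e1 e2 : gE G) (a b : bool), gend a e1 = gend b e2 ->
        ((labs a e1)^-1 * labs b e2)%g = ((labs a (sE e1))^-1 * labs b (sE e2))%g].

Definition sym_labeled k m (G : lgraph k m) : Prop :=
  forall e : gE G, labm e = labp e.

From mathcomp Require Import all_boot fingroup perm.

(* A homomorphism preserves the relative labels [l^a(e1)^-1 l^b(e2)] at shared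
   vertices; taking [a = b] and equal image labels the right-hand side is [1],
   so the labels of [e1] and [e2] at that end coincide. For part 2, a common
   left translate [alpha] of both end labels of an image edge equals the
   symmetric label of its preimage, so the two end labels agree. *)

Lemma lab_eq k m (G : lgraph k m) (e1 e2 : gE G) :
  labm e1 = labm e2 -> labj e1 = labj e2 -> labp e1 = labp e2 ->
  lab e1 = lab e2.
Proof.
rewrite /labm /labj /labp.
by case: (lab e1) => [[? ?] ?]; case: (lab e2) => [[? ?] ?] /= -> -> ->.
Qed.

Lemma Gm_hom_labs_inj k m (G H : lgraph k m) (sV : gV G -> gV H)
    (sE : gE G -> gE H) (a : bool) (e1 e2 : gE G) :
  is_Gm_hom sV sE -> gend a e1 = gend a e2 ->
  labs a (sE e1) = labs a (sE e2) -> labs a e1 = labs a e2.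
Proof.
move=> [_ _ _ hrel] he hs; have := hrel e1 e2 a a he.
by rewrite hs mulVg => /eqP; rewrite -eq_mulVg1 => /eqP.
Qed.
Arguments Gm_hom_labs_inj [k m G H sV sE] a [e1 e2].

Lemma Gm_hom_lab_inj k m (G H : lgraph k m) (sV : gV G -> gV H)
    (sE : gE G -> gE H) (e1 e2 : gE G) :
  is_Gm_hom sV sE -> gsrc e1 = gsrc e2 -> gtgt e1 = gtgt e2 ->
  lab (sE e1) = lab (sE e2) -> lab e1 = lab e2.
Proof.
move=> hs hsrc htgt hlab; have [_ _ hj _] := hs.
apply: lab_eq.
- by apply: (Gm_hom_labs_inj false hs hsrc); rewrite /labs /labm hlab.
- by rewrite hj (hj e2) /labj hlab.
- by apply: (Gm_hom_labs_inj true hs htgt); rewrite /labs /labp hlab.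
Qed.

Lemma sym_labeled_translate k m (G H : lgraph k m) (sE : gE G -> gE H)
    (alpha : {perm 'I_k}) :
  sym_labeled G ->
  (forall (e : gE G) (a : bool), labs a e = (alpha * labs a (sE e))%g) ->
  forall e : gE G, labm (sE e) = labp (sE e).
Proof.
move=> hsym htr e; apply: (mulgI alpha).
by rewrite -[labm _]/(labs false _) -[labp _]/(labs true _) -!htr /= hsym.
Qed.

Theorem mainTheorem2 (k m : nat) (Gamma : {group {perm 'I_k}}) (hm : 0 < m)
  (G H : lgraph k m) (hG : is_Gm_graph Gamma G) (hH : is_Gm_graph Gamma H)
  (sV : gV G -> gV H) (sE : gE G -> gE H) (hs : is_Gm_hom sV sE) :
  (forall e1 e2 : gE G, gsrc e1 = gsrc e2 -> gtgt e1 = gtgt e2 ->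
      lab (sE e1) = lab (sE e2) -> lab e1 = lab e2)
  /\
  (sym_labeled G ->
   forall alpha : {perm 'I_k}, alpha \in Gamma ->
   (forall (e : gE G) (a : bool), labs a e = (alpha * labs a (sE e))%g) ->
   forall e : gE G, labm (sE e) = labp (sE e)).
Proof.
split=> [e1 e2|hsym alpha _]; first exact: Gm_hom_lab_inj hs.
exact: sym_labeled_translate.
Qed.
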